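(* For all positive integers $k,t$, with $\mathcal{W}$ the weight partition of $\mathbb{F}_q^k$, $$\frac{2q}{(k+1)^2(q-1)-a(q-a)}\,S_{k,t}\;\le\; r_{\mathcal{W}}(k,t)\;\le\; N_q\big(\min(2t+1,k+1),\,2t\big),$$ where $a=(k+1)\bmod q$ and $$S_{k,t}=\begin{cases}\dfrac{k(k+1)(6t+1-k)}{6}, & k\le 2t,\\[4pt] \dfrac{t(2t+1)(3k-2t+1)}{3}, & k\ge 2t.\end{cases}$$
   Context: $\mathcal{W}=\{W_0,\ldots,W_k\}$ with $W_i=\{u\in\mathbb{F}_q^k:\mathrm{wt}(u)=i\}$ (Hamming weight). A $(\mathcal{P},t)$-encoding with redundancy $r$ is a systematic map $\mathcal{C}:\mathbb{F}_q^k\to\mathbb{F}_q^{k+r}$, $\mathcal{C}(u)=(u,p(u))$, with Hamming distance $d(\mathcal{C}(u),\mathcal{C}(v))\ge 2t+1$ whenever $u,v$ lie in different blocks of $\mathcal{P}$; $r_{\mathcal{P}}(k,t)$ is the minimum such $r$. $N_q(M,d)$ denotes the minimum length of a $q$-ary code with $M$ codewords and minimum Hamming distance $d$. *)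

From HB Require Import structures.
From mathcomp Require Import all_boot all_order all_algebra.
Set Implicit Arguments. Unset Strict Implicit. Unset Printing Implicit Defensive.
Import Order.TTheory GRing.Theory Num.Theory.

Section Hamming.
Variable F : finFieldType.

Definition wt n (u : 'rV[F]_n) : nat := #|[set i | u ord0 i != 0%R]|.
Definition hdist n (u v : 'rV[F]_n) : nat := #|[set i | u ord0 i != v ord0 i]|.

(* There is a systematic (W,t)-encoding with redundancy r, W the weight
   partition: a map p : F^k -> F^r such that C(u) = (u, p u) satisfies
   d(C u, C v) >= 2t+1 whenever wt u != wt v (u, v in different blocks). *)
Definition weight_encodable (k t r : nat) : bool :=
  [exists p : {ffun 'rV[F]_k -> 'rV[F]_r},
     [forall u, [forall v, (wt u != wt v) ==>
        (2 * t + 1 <= hdist (row_mx u (p u)) (row_mx v (p v)))]]].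

Definition code_exists (M d n : nat) : bool :=
  [exists C : {set 'rV[F]_n},
     (#|C| == M) && [forall x in C, forall y in C, (x != y) ==> (d <= hdist x y)]].

Definition blockv n s (j : nat) : 'rV[F]_(n * s) :=
  \row_(i < n * s) (if i %/ s == j then 1%R else 0%R : F).

Lemma blockv_dist n s j j' : j < n -> j != j' ->
  s <= hdist (blockv n s j) (blockv n s j').
Proof.
move=> ltjn njj.
have lt i : i < s -> j * s + i < n * s.
  move=> lis; apply: (@leq_trans (j * s + s)); first by rewrite ltn_add2l.
  by rewrite -mulSnr leq_mul2r ltjn orbT.
pose f (i : 'I_s) : 'I_(n * s) := Ordinal (lt i (ltn_ord i)).
have finj : injective f.
  by move=> x y /(congr1 val) /= /eqP; rewrite eqn_add2l => /eqP/val_inj.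
apply: (@leq_trans #|f @: setT|); first by rewrite card_imset // cardsT card_ord.
rewrite /hdist.
apply: subset_leq_card; apply/subsetP => x /imsetP [i _ ->].
have sp : 0 < s by case: (i) => m; apply: leq_trans; rewrite ltnS.
rewrite inE !mxE /= divnMDl // divn_small // addn0 eqxx.
by case: ifP => [/eqP ej|_]; [rewrite ej eqxx in njj | rewrite oner_neq0].
Qed.

Lemma hdist_row_mx k r (a c : 'rV[F]_k) (b e : 'rV[F]_r) :
  hdist b e <= hdist (row_mx a b) (row_mx c e).
Proof.
rewrite /hdist -(card_imset _ (@rshift_inj k r)).
apply: subset_leq_card; apply/subsetP => x /imsetP [i].
by rewrite !inE => ne ->; rewrite !row_mxEr.
Qed.

Lemma weight_encodable_exists k t : exists r, weight_encodable k t r.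
Proof.
exists ((k.+1) * (2 * t + 1)); apply/existsP.
exists [ffun u => blockv k.+1 (2 * t + 1) (wt u)].
apply/forallP => u; apply/forallP => v; apply/implyP => nw.
apply: leq_trans (hdist_row_mx _ _ _ _); rewrite !ffunE.
apply: blockv_dist nw; rewrite ltnS /wt.
by apply: leq_trans (max_card _) _; rewrite card_ord.
Qed.

Lemma code_exists_exists M d : exists n, code_exists M d n.
Proof.
exists (M * d.+1); apply/existsP.
pose g (j : 'I_M) := blockv M d.+1 j.
have ginj : injective g.
  move=> x y gxy; apply/eqP; apply/negPn/negP => nxy.
  have := blockv_dist d.+1 (ltn_ord x) nxy; rewrite -/(g x) -/(g y) gxy.
  by rewrite /hdist (_ : [set _ | _] = set0) ?cards0 //; apply/setP => i; rewrite !inE eqxx.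
exists (g @: setT); rewrite card_imset // cardsT card_ord eqxx /=.
apply/forall_inP => x /imsetP [j _ ->]; apply/forall_inP => y /imsetP [j' _ ->].
apply/implyP => nj; have nj' : (j : nat) != j'.
  by apply: contra nj => /eqP/val_inj ->.
by apply: leq_trans (blockv_dist _ (ltn_ord j) nj'); apply: leqnSn.
Qed.

Definition r_W (k t : nat) : nat := ex_minn (weight_encodable_exists k t).

Definition N_q (M d : nat) : nat := ex_minn (code_exists_exists M d).

End Hamming.

Local Open Scope ring_scope.

Definition S_kt (k t : nat) : rat :=
  if (k <= 2 * t)%N then (k%:Q * (k.+1)%:Q * ((6 * t + 1)%:Q - k%:Q)) / 6%:Q
  else (t%:Q * (2 * t + 1)%:Q * ((3 * k + 1)%:Q - (2 * t)%:Q)) / 3%:Q.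

From HB Require Import structures.
From mathcomp Require Import all_boot all_order all_algebra.
From mathcomp Require Import zify ring lra.

Set Implicit Arguments. Unset Strict Implicit. Unset Printing Implicit Defensive.
Import Order.TTheory GRing.Theory Num.Theory.

(* Lower bound: the unary words 1^i 0^(k-i), i = 0..k, are at distance |i - j|,
   so their redundancy parts must be at distance at least 2t+1-|i-j|; summed
   over ordered pairs this demand is 2 S_{k,t}.  On the other hand, k+1 symbols
   from F_q disagree on at most ((k+1)^2 (q-1) - a(q-a))/q ordered pairs, the
   balanced distribution of symbols being extremal, so each of the r redundancy
   coordinates supplies at most that much.
   Upper bound: append to u the codeword of index (wt u mod M) of a code with
   M = min(2t+1, k+1) words and minimum distance 2t; two words of different
   weight at distance at most 2t have weights differing by less than M. *)

Lemma leq_tangent_sqr m n : (2 * m + 1) * n <= n * n + m * (m + 1).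
Proof.
case: (leqP n m) => [le_nm|lt_mn].
  have [d ->] : exists d, m = n + d by exists (m - n); lia.
  by rewrite !mulnDr !mulnDl; lia.
have [d ->] : exists d, n = m + 1 + d by exists (n - m - 1); lia.
by rewrite !mulnDr !mulnDl; lia.
Qed.

(* With q = a + b and M = m q + a:  q ((2m+1) M - q m(m+1)) = M^2 + a b. *)
Lemma balanced_sqr_identity m a b :
  (a + b) * ((2 * m + 1) * (m * (a + b) + a))
  = (m * (a + b) + a) ^ 2 + a * b + (a + b) * ((a + b) * (m * (m + 1))).
Proof. ring. Qed.

Lemma sum_sqr_balanced (I : finType) (n : I -> nat) M :
  0 < #|I| -> \sum_i n i = M ->
  M ^ 2 + (M %% #|I|) * (#|I| - M %% #|I|) <= #|I| * \sum_i n i ^ 2.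
Proof.
move=> I_gt0 sumM; set q := #|I|; set m := M %/ q.
have tangent : (2 * m + 1) * M <= \sum_i n i ^ 2 + q * (m * (m + 1)).
  rewrite -sumM big_distrr /= -sum_nat_const -big_split /=.
  by apply: leq_sum => i _; rewrite -mulnn leq_tangent_sqr.
have mod_le : M %% q <= q by rewrite ltnW // ltn_mod.
have := balanced_sqr_identity m (M %% q) (q - M %% q).
rewrite (subnKC mod_le) -divn_eq => identity.
rewrite -(leq_add2r (q * (q * (m * (m + 1))))) -identity -mulnDr.
by rewrite leq_mul2l tangent orbT.
Qed.

Lemma sum_fibers (I T : finType) (x : I -> T) :
  \sum_(f : T) \sum_i (x i == f : nat) = #|I|.
Proof.
rewrite exchange_big /= -sum1_card; apply: eq_bigr => i _.
by rewrite (bigD1 (x i)) //= eqxx big1 // => f; rewrite eq_sym => /negbTE ->.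
Qed.

Lemma sum_pairs_eq (I T : finType) (x : I -> T) :
  \sum_i \sum_j (x i == x j : nat) = \sum_(f : T) (\sum_i (x i == f : nat)) ^ 2.
Proof.
under [RHS]eq_bigr => f _ do rewrite -mulnn big_distrl /=.
rewrite [RHS]exchange_big /=; apply: eq_bigr => i _.
rewrite [RHS](bigD1 (x i)) //= eqxx mul1n [X in _ + X]big1 ?addn0.
  by apply: eq_bigr => j _; rewrite eq_sym.
by move=> f; rewrite eq_sym => /negbTE ->.
Qed.

Lemma disagreements_bound (I T : finType) (x : I -> T) :
  0 < #|T| ->
  #|T| * \sum_i \sum_j (x i != x j : nat) + (#|I| %% #|T|) * (#|T| - #|I| %% #|T|)
    <= #|I| ^ 2 * (#|T| - 1).
Proof.
move=> T_gt0.
have pairs :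
    \sum_i \sum_j (x i != x j : nat) + \sum_i \sum_j (x i == x j : nat) = #|I| ^ 2.
  rewrite -big_split /= -mulnn -sum_nat_const; apply: eq_bigr => i _.
  rewrite -big_split /= -[#|I|]muln1 -sum_nat_const.
  by apply: eq_bigr => j _; case: eqP.
have := sum_sqr_balanced T_gt0 (sum_fibers x); rewrite -sum_pairs_eq.
move: pairs; set D := \sum_i _; set E := \sum_i _; set a := _ %% _.
move=> <- balanced; rewrite [X in _ <= X]mulnBr muln1 mulnDl; lia.
Qed.

Lemma sum_ltn_mismatch k i j :
  \sum_(l < k) ((l < i) != (l < j) : nat) = (minn k j - minn k i) + (minn k i - minn k j).
Proof.
elim: k => [|k IHk]; first by rewrite big_ord0 !min0n.
by rewrite big_ord_recr /= IHk; case: (ltnP k i) => ?; case: (ltnP k j) => ? /=; lia.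
Qed.

Lemma eqmod_neq_dist m i j : i != j -> i = j %[mod m] -> m <= (i - j) + (j - i).
Proof.
wlog le_ij : i j / i <= j.
  move=> wlog_le; case: (leqP i j) => [le_ij|/ltnW le_ji neq_ij eq_ij].
    exact: wlog_le.
  by rewrite addnC wlog_le // eq_sym.
move=> neq_ij /eqP; rewrite eq_sym eqn_mod_dvd // => /dvdn_leq; rewrite subn_gt0.
by rewrite ltn_neqAle neq_ij le_ij => /(_ isT); lia.
Qed.

(* Truncated subtraction makes this the positive part of 2t+1-|i-j|, the
   distance needed between the redundancy parts of words of weights i != j. *)
Definition required_dist t i j := (2 * t + 1 - ((i - j) + (j - i))) * (i != j).
Definition required_total t M := \sum_(i < M) \sum_(j < M) required_dist t i j.
Definition required_row t M := \sum_(i < M) (2 * t + 1 - (M - i)).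

Lemma required_total_rec t M :
  required_total t M.+1 = required_total t M + 2 * required_row t M.
Proof.
have row_eq : \sum_(i < M) required_dist t i M = required_row t M.
  apply: eq_bigr => i _; rewrite /required_dist neq_ltn ltn_ord muln1.
  by congr (_ - _); have := ltn_ord i; lia.
have col_eq : \sum_(i < M) required_dist t M i = required_row t M.
  apply: eq_bigr => i _; rewrite /required_dist neq_ltn ltn_ord orbT muln1.
  by congr (_ - _); have := ltn_ord i; lia.
rewrite /required_total big_ord_recr /=.
under eq_bigr => i _ do rewrite big_ord_recr /=.
rewrite big_split /= big_ord_recr /= row_eq col_eq /required_dist eqxx muln0.
lia.
Qed.

Lemma required_row_rec t M : required_row t M.+1 = required_row t M + (2 * t - M).
Proof.
rewrite /required_row big_ord_recl /= subn0 addnC; congr (_ + _); lia.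
Qed.

Section ClosedForm.
Local Open Scope ring_scope.

Lemma S_ktE k t : S_kt k t =
  if (k <= 2 * t)%N then k%:R * k.+1%:R * ((6 * t + 1)%N%:R - k%:R) / 6%:R
  else t%:R * (2 * t + 1)%N%:R * ((3 * k + 1)%N%:R - (2 * t)%N%:R) / 3%:R.
Proof. by []. Qed.

Lemma required_row_closed t M : (required_row t M)%:R =
  if (M <= 2 * t)%N then M%:R * ((4 * t + 1)%N%:R - M%:R) / 2%:R
  else t%:R * (2 * t + 1)%N%:R :> rat.
Proof.
elim: M => [|M IHM]; first by rewrite /required_row big_ord0 !mul0r.
rewrite required_row_rec natrD IHM.
have [le_M1t|lt_tM1] := leqP M.+1 (2 * t).
  by rewrite (ltnW le_M1t) natrB ?(ltnW le_M1t) // -addn1 !natrD ?natrM; field.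
have [le_Mt|lt_tM] := leqP M (2 * t).
  have -> : M = (2 * t)%N by lia.
  by rewrite subnn addr0 !natrD ?natrM; field.
by rewrite (_ : 2 * t - M = 0)%N ?addr0 //; lia.
Qed.

Lemma S_kt_rec k t : S_kt k.+1 t = S_kt k t + (required_row t k.+1)%:R.
Proof.
rewrite required_row_closed !S_ktE.
have [le_k1t|lt_tk1] := leqP k.+1 (2 * t).
  by rewrite (ltnW le_k1t) -addn1 !natrD ?natrM; field.
have [le_kt|_] := leqP k (2 * t).
  have -> : k = (2 * t)%N by lia.
  by rewrite -addn1 !natrD ?natrM; field.
by rewrite -addn1 !natrD ?natrM; field.
Qed.

Lemma required_total_closed k t : (required_total t k.+1)%:R = 2 * S_kt k t :> rat.
Proof.
elim: k => [|k IHk].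
  by rewrite /required_total !big_ord1 /required_dist eqxx muln0 S_ktE !mul0r mulr0.
by rewrite required_total_rec natrD IHk S_kt_rec natrM; ring.
Qed.

End ClosedForm.

Section Hamming.
Variable F : finFieldType.

Lemma hdist_sum n (u v : 'rV[F]_n) :
  hdist u v = \sum_(i < n) (u ord0 i != v ord0 i : nat).
Proof.
by rewrite /hdist -sum1_card big_mkcond /=; apply: eq_bigr => i _; rewrite inE.
Qed.

Lemma wt_sum n (u : 'rV[F]_n) : wt u = \sum_(i < n) (u ord0 i != 0%R : nat).
Proof. by rewrite /wt -sum1_card big_mkcond /=; apply: eq_bigr => i _; rewrite inE. Qed.

Lemma hdist_row_mxE k r (a c : 'rV[F]_k) (b e : 'rV[F]_r) :
  hdist (row_mx a b) (row_mx c e) = hdist a c + hdist b e.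
Proof.
by rewrite !hdist_sum big_split_ord; congr (_ + _); apply: eq_bigr => i _;
  rewrite ?row_mxEl ?row_mxEr.
Qed.

Lemma hdistC n (u v : 'rV[F]_n) : hdist u v = hdist v u.
Proof. by rewrite !hdist_sum; apply: eq_bigr => i _; rewrite eq_sym. Qed.

Lemma wt_le_dim n (u : 'rV[F]_n) : wt u <= n.
Proof. by rewrite /wt (leq_trans (max_card _)) // card_ord. Qed.

Lemma wt_dist_le_hdist n (u v : 'rV[F]_n) : (wt u - wt v) + (wt v - wt u) <= hdist u v.
Proof.
suff wt_le (u' v' : 'rV[F]_n) : wt u' <= wt v' + hdist u' v'.
  by have := wt_le u v; have := wt_le v u; rewrite hdistC; lia.
rewrite !wt_sum hdist_sum -big_split /=; apply: leq_sum => i _.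
by case: (eqVneq (u' ord0 i) 0%R) => //= nz; case: eqVneq => // ->; rewrite nz.
Qed.

Definition unary_vec k w : 'rV[F]_k := \row_(l < k) (if l < w then 1%R else 0%R).

Lemma unary_vec_neq k i j (l : 'I_k) :
  (unary_vec k i ord0 l != unary_vec k j ord0 l) = ((l < i) != (l < j)).
Proof.
by rewrite !mxE; do 2!case: ifP => _; rewrite ?eqxx ?oner_eq0 // eq_sym oner_eq0.
Qed.

Lemma wt_unary_vec k w : w <= k -> wt (unary_vec k w) = w.
Proof.
move=> le_wk; rewrite wt_sum.
rewrite (eq_bigr (fun l : 'I_k => ((l < 0) != (l < w) : nat))).
  by rewrite sum_ltn_mismatch; lia.
by move=> l _; rewrite mxE; case: ifP; rewrite ?eqxx ?oner_eq0.
Qed.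

Lemma hdist_unary_vec k i j :
  hdist (unary_vec k i) (unary_vec k j) <= (i - j) + (j - i).
Proof.
rewrite hdist_sum (eq_bigr _ (fun l _ => congr1 nat_of_bool (unary_vec_neq i j l))).
by rewrite sum_ltn_mismatch; lia.
Qed.

Definition weight_separating k t r (p : 'rV[F]_k -> 'rV[F]_r) :=
  forall u v, wt u != wt v -> 2 * t + 1 <= hdist (row_mx u (p u)) (row_mx v (p v)).

Lemma weight_encodableP k t r :
  reflect (exists p : 'rV[F]_k -> 'rV[F]_r, weight_separating t p)
          (weight_encodable F k t r).
Proof.
apply: (iffP existsP) => [[p /forallP sep_p]|[p sep_p]].
  by exists p => u v; move: (sep_p u) => /forallP/(_ v)/implyP.
exists (finfun p); apply/forallP => u; apply/forallP => v; apply/implyP.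
by rewrite !ffunE; apply: sep_p.
Qed.

Lemma required_dist_le_hdist k t r (p : 'rV[F]_k -> 'rV[F]_r) i j :
  weight_separating t p -> i <= k -> j <= k ->
  required_dist t i j <= hdist (p (unary_vec k i)) (p (unary_vec k j)).
Proof.
move=> sep_p le_ik le_jk; rewrite /required_dist; case: eqP => [_|/eqP neq_ij].
  by rewrite muln0.
have := sep_p (unary_vec k i) (unary_vec k j).
rewrite !wt_unary_vec // hdist_row_mxE => /(_ neq_ij).
by have := hdist_unary_vec k i j; lia.
Qed.

Lemma redundancy_lb k t r (p : 'rV[F]_k -> 'rV[F]_r) :
  weight_separating t p ->
  #|F| * required_total t k.+1 + r * ((k.+1 %% #|F|) * (#|F| - k.+1 %% #|F|))
    <= r * (k.+1 ^ 2 * (#|F| - 1)).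
Proof.
move=> sep_p; pose P (i : 'I_k.+1) := p (unary_vec k i).
have demand : required_total t k.+1
    <= \sum_(c < r) \sum_i \sum_j (P i ord0 c != P j ord0 c : nat).
  rewrite exchange_big /=; apply: leq_sum => i _.
  rewrite exchange_big /=; apply: leq_sum => j _.
  by rewrite -hdist_sum required_dist_le_hdist // -ltnS.
have F_gt0 : 0 < #|F| by apply/card_gt0P; exists 0%R.
set a := k.+1 %% #|F|.
have total : \sum_(c < r)
      (#|F| * \sum_i \sum_j (P i ord0 c != P j ord0 c : nat) + a * (#|F| - a))
    <= \sum_(c < r) (k.+1 ^ 2 * (#|F| - 1)).
  apply: leq_sum => c _.
  by have := disagreements_bound (fun i => P i ord0 c) F_gt0; rewrite card_ord.
rewrite big_split /= -big_distrr /= !sum_nat_const card_ord in total.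
by apply: leq_trans total; rewrite [r * _]mulnC leq_add2r leq_mul2l demand orbT.
Qed.

End Hamming.

Section Redundancy.
Variable F : finFieldType.

Lemma r_W_encodable k t : weight_encodable F k t (r_W F k t).
Proof. by rewrite /r_W; case: ex_minnP. Qed.

Lemma r_W_min k t r : weight_encodable F k t r -> r_W F k t <= r.
Proof. by rewrite /r_W; case: ex_minnP => r' _; apply. Qed.

Lemma N_q_code M d : code_exists F M d (N_q F M d).
Proof. by rewrite /N_q; case: ex_minnP. Qed.

Lemma weight_encodable_code k t M n :
  minn (2 * t + 1) k.+1 <= M -> code_exists F M (2 * t) n -> weight_encodable F k t n.
Proof.
move=> le_min /existsP [C /andP [/eqP card_C /forall_inP dist_C]].
have M_gt0 : 0 < M by lia.
have index_lt w : w %% M < size (enum C) by rewrite -cardE card_C ltn_pmod.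
have codeword_in w : nth 0%R (enum C) (w %% M) \in C by rewrite -mem_enum mem_nth.
apply/weight_encodableP; exists (fun u => nth 0%R (enum C) (wt u %% M)).
move=> u v neq_wt; rewrite hdist_row_mxE.
have wt_dist := wt_dist_le_hdist u v.
have [far|near] := leqP (2 * t + 1) (hdist u v); first by lia.
have le_u := wt_le_dim u; have le_v := wt_le_dim v.
have neq_mod : wt u %% M != wt v %% M.
  by apply/eqP => /(eqmod_neq_dist neq_wt); lia.
have neq_codewords : nth 0%R (enum C) (wt u %% M) != nth 0%R (enum C) (wt v %% M).
  by rewrite nth_uniq ?enum_uniq.
have := dist_C _ (codeword_in (wt u)) => /forall_inP/(_ _ (codeword_in (wt v))).
rewrite neq_codewords /=; lia.
Qed.

End Redundancy.

Local Open Scope ring_scope.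

Lemma ler_ratio_bound (R : realFieldType) (c s r x y : R) :
  0 <= c -> 0 <= s -> 0 <= r -> c * s + r * y <= r * x -> c / (x - y) * s <= r.
Proof.
move=> c_ge0 s_ge0 r_ge0 le_xy; have [xy_gt0|xy_le0] := ltrP 0 (x - y).
  by rewrite mulrAC ler_pdivrMr // mulrBr; lra.
apply: le_trans r_ge0; apply: mulr_le0_ge0 => //.
by rewrite mulr_ge0_le0 // invr_le0.
Qed.

Theorem corollary5 (F : finFieldType) (k t : nat) :
  (0 < k)%N -> (0 < t)%N ->
  let q := #|F| in
  let a := (k.+1 %% q)%N in
  ((2 * q)%N%:Q / ((k.+1 ^ 2 * (q - 1))%N%:Q - (a * (q - a))%N%:Q)) * S_kt k t
    <= (r_W F k t)%:Q
  /\ (r_W F k t <= N_q F (minn (2 * t + 1) k.+1) (2 * t))%N.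
Proof.
move=> _ _ q a; split; last first.
  exact/r_W_min/(weight_encodable_code (leqnn _))/N_q_code.
have /weight_encodableP [p sep_p] := r_W_encodable F k t.
have S_ge0 : 0 <= S_kt k t.
  by rewrite -(@pmulr_rge0 _ 2) // -required_total_closed ler0n.
move: (redundancy_lb sep_p); rewrite -/q -/a.
rewrite -(ler_nat rat) natrD (natrM _ q) !(natrM _ (r_W F k t)) required_total_closed.
rewrite mulrCA mulrA -!pmulrn => bound.
by apply: ler_ratio_bound; rewrite ?ler0n // natrM.
Qed.
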